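(* Fix a maturity $t$ and an underlying security. For each strike $K\ge 0$ let $C(K)$ and $P(K)$ denote the prices of the European call and put of strike $K$ and maturity $t$, and let $F$ be the tradable forward price for delivery at $t$. Assume put-call parity holds for every strike: $C(K)-P(K)+K=F$ for all $K\ge 0$. Assume calls and puts are valued by expectation of terminal payoff, i.e. there exist Borel probability measures $\mu_1,\mu_2$ on $\Omega=[0,\infty)$ with finite first moment such that $C(K)=\int_\Omega (S-K)^+\,\mathrm{d}\mu_1(S)$ and $P(K)=\int_\Omega (K-S)^+\,\mathrm{d}\mu_2(S)$ for all $K\ge 0$. Then there is a unique Borel probability measure $\mu_Q$ on $\Omega$ that prices both all European calls and all European puts of maturity $t$ by expectation of terminal payoff, i.e. $C(K)=\int_\Omega (S-K)^+\,\mathrm{d}\mu_Q(S)$ and $P(K)=\int_\Omega (K-S)^+\,\mathrm{d}\mu_Q(S)$ for every $K\ge 0$.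
   Context: $\Omega=[0,\infty)$ is the set of possible values $S=S_t$ of the underlying at maturity $t$. Option prices and the forward price are expressed in units payable at maturity (undiscounted), so that put-call parity reads $C(K)-P(K)+K=F$. The forward is assumed to exist and be tradable; it may be the arbitrage (risk-neutral) forward $S_0e^{(r-\delta)(t-t_0)}$ or any other tradable forward price. *)

(* Omega = [0, +oo) is modelled as the Borel
   measurable space R (R : realType) with measures concentrated on `[0, +oo[. *)
From mathcomp Require Import all_boot all_order all_algebra.
From mathcomp Require Import all_classical all_reals all_analysis.
Unset Printing Implicit Defensive.
Import Order.TTheory GRing.Theory Num.Theory.
Local Open Scope classical_set_scope.
Local Open Scope ring_scope.

Definition Omega (R : realType) : set R := `[0%R, +oo[%classic.

Definition on_Omega (R : realType) (mu : probability R R) : Prop :=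
  mu (Omega R) = 1%E.

Definition finite_first_moment (R : realType) (mu : probability R R) : Prop :=
  mu.-integrable (Omega R) (fun S => S%:E).

Definition call_value (R : realType) (mu : probability R R) (K : R) : \bar R :=
  (\int[mu]_(S in Omega R) (Num.max (S - K) 0)%:E)%E.

Definition put_value (R : realType) (mu : probability R R) (K : R) : \bar R :=
  (\int[mu]_(S in Omega R) (Num.max (K - S) 0)%:E)%E.

From mathcomp Require Import all_boot all_order all_algebra.
From mathcomp Require Import all_classical all_reals all_analysis.
From mathcomp Require Import measurable_realfun lra.
Import Order.TTheory GRing.Theory Num.Theory.
Local Open Scope classical_set_scope.
Local Open Scope ring_scope.

(* Call prices determine the pricing measure: for h > 0 the call payoffs give
   h mu(]K+h, oo[) <= C(K) - C(K+h) <= h mu(]K, oo[), so letting h -> 0+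
   recovers the tails mu(]K, oo[) for K >= 0, while tails at negative K equal 1
   for a measure carried by [0, oo); and tails determine a probability on R.
   For existence take mu1: the pointwise identity (K - S)^+ + S = (S - K)^+ + K
   on [0, oo) gives put prices C(K) + K - C(0) under mu1, and parity at K = 0,
   where every put is worthless, identifies F with C(0). *)

Section option_values.
Context {R : realType}.
Implicit Types (mu nu : probability R R) (K h a : R).

Lemma measurable_Omega : measurable (Omega R).
Proof. exact: measurable_itv. Qed.

Lemma Omega_ge0 (S : R) : Omega R S -> 0 <= S.
Proof. by rewrite /Omega /= in_itv /= andbT. Qed.

Lemma in_oitv_pinfty a S : (S \in `]a, +oo[%classic) = (a < S).
Proof. by rewrite set_itvE mem_setE. Qed.

Lemma measurable_call_payoff K :
  measurable_fun (Omega R) (fun S => (Num.max (S - K) 0)%:E : \bar R).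
Proof. by apply/measurable_EFinP/measurable_maxr => //; exact: measurable_funB. Qed.

Lemma measurable_put_payoff K :
  measurable_fun (Omega R) (fun S => (Num.max (K - S) 0)%:E : \bar R).
Proof. by apply/measurable_EFinP/measurable_maxr => //; exact: measurable_funB. Qed.

Lemma measurable_indic_oitv a :
  measurable_fun (Omega R) (fun S => (\1_(`]a, +oo[%classic) S)%:E : \bar R).
Proof. by apply/measurable_EFinP/measurable_indic; exact: measurable_itv. Qed.

Local Open Scope ereal_scope.

Lemma max0_ge0 (x : R) : 0 <= (Num.max x 0)%:E.
Proof. by rewrite lee_fin le_max lexx orbT. Qed.

Lemma put_value0 mu : put_value R mu 0 = 0.
Proof.
rewrite /put_value -(integral0 mu (Omega R)); apply: eq_integral => S.
rewrite inE => /Omega_ge0 S0; rewrite sub0r; congr (_%:E).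
by apply/max_idPr; rewrite oppr_le0.
Qed.

Lemma put_call_value mu K : (0 <= K)%R -> on_Omega R mu ->
  put_value R mu K + call_value R mu 0 = call_value R mu K + K%:E.
Proof.
move=> K0 muO.
have -> : K%:E = \int[mu]_(S in Omega R) cst K%:E S.
  by rewrite integral_cst ?[X in _ * X]muO ?mule1 //; exact: measurable_Omega.
rewrite /put_value /call_value.
rewrite -(ge0_integralD mu _ (fun S _ => max0_ge0 _) (measurable_put_payoff K)
  (fun S _ => max0_ge0 _) (measurable_call_payoff 0)); last exact: measurable_Omega.
rewrite -(ge0_integralD mu _ (fun S _ => max0_ge0 _) (measurable_call_payoff K)
  (fun S _ => K0 : 0 <= K%:E) (measurable_cst _)); last exact: measurable_Omega.
apply: eq_integral => S; rewrite inE => /Omega_ge0 S0.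
rewrite -!EFinD subr0 (max_idPl S0); congr (_%:E).
by case: (leP (K - S)%R 0%R) => ?; case: (leP (S - K)%R 0%R) => ?; lra.
Qed.

Lemma integral_indic_oitvZ mu a h : (0 <= a)%R -> (0 <= h)%R ->
  \int[mu]_(S in Omega R) (h%:E * (\1_(`]a, +oo[%classic) S)%:E) =
  h%:E * mu `]a, +oo[%classic.
Proof.
move=> a0 h0.
have indic_ge0 S : Omega R S -> 0 <= (\1_(`]a, +oo[%classic) S)%:E :> \bar R.
  by rewrite lee_fin.
rewrite (ge0_integralZl_EFin _ measurable_Omega indic_ge0 (measurable_indic_oitv a) h0).
rewrite integral_indic; [|exact: measurable_Omega|exact: measurable_itv].
congr (_ * mu _); apply/setIidl => S /=; rewrite /Omega /= !in_itv /= !andbT.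
by move=> aS; exact: le_trans a0 (ltW aS).
Qed.

Let shifted_payoff K h a S : \bar R :=
  (Num.max (S - (K + h)) 0)%:E + h%:E * (\1_(`]a, +oo[%classic) S)%:E.

Let measurable_shifted_payoff K h a :
  measurable_fun (Omega R) (shifted_payoff K h a).
Proof.
apply: emeasurable_funD; first exact: measurable_call_payoff.
exact: emeasurable_funM (measurable_cst _) (measurable_indic_oitv a).
Qed.

Let shifted_payoff_ge0 K h a S : (0 <= h)%R -> 0 <= shifted_payoff K h a S.
Proof. by move=> h0; rewrite adde_ge0 ?max0_ge0 // -EFinM lee_fin mulr_ge0. Qed.

Lemma call_value_shift mu K h a : (0 <= a)%R -> (0 <= h)%R ->
  call_value R mu (K + h) + h%:E * mu `]a, +oo[%classic =
  \int[mu]_(S in Omega R) shifted_payoff K h a S.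
Proof.
move=> a0 h0; rewrite -integral_indic_oitvZ // /call_value.
rewrite -(ge0_integralD mu _ (fun S _ => max0_ge0 _) (measurable_call_payoff _)
  _ (emeasurable_funM (measurable_cst _) (measurable_indic_oitv a))) //.
- exact: measurable_Omega.
- by move=> S _; rewrite -EFinM lee_fin mulr_ge0.
Qed.

Lemma call_value_shift_ge mu K h : (0 <= K)%R -> (0 < h)%R ->
  call_value R mu (K + h) + h%:E * mu `](K + h)%R, +oo[%classic <= call_value R mu K.
Proof.
move=> K0 /ltW h0; rewrite call_value_shift ?addr_ge0 // /call_value.
apply: ge0_le_integral.
- exact: measurable_Omega.
- by move=> S _; exact: shifted_payoff_ge0.
- exact: measurable_shifted_payoff.
- exact: measurable_call_payoff.
move=> S /Omega_ge0 S0; rewrite /shifted_payoff -EFinM -EFinD lee_fin indicE.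
rewrite in_oitv_pinfty.
case: (ltP (K + h) S)%R => /= ?; rewrite ?mulr1 ?mulr0; case: (leP (S - (K + h)) 0)%R => ?;
  case: (leP (S - K) 0)%R => ?; lra.
Qed.

Lemma call_value_shift_le mu K h : (0 <= K)%R -> (0 < h)%R ->
  call_value R mu K <= call_value R mu (K + h) + h%:E * mu `]K, +oo[%classic.
Proof.
move=> K0 h0; rewrite call_value_shift ?(ltW h0) // /call_value.
apply: ge0_le_integral.
- exact: measurable_Omega.
- by move=> S _; exact: max0_ge0.
- exact: measurable_call_payoff.
- exact: measurable_shifted_payoff.
move=> S /Omega_ge0 S0; rewrite /shifted_payoff -EFinM -EFinD lee_fin indicE.
rewrite in_oitv_pinfty.
case: (ltP K S)%R => /= ?; rewrite ?mulr1 ?mulr0; case: (leP (S - (K + h)) 0)%R => ?;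
  case: (leP (S - K) 0)%R => ?; lra.
Qed.

Lemma measure_oitv_le_shifts (mu : {measure set R -> \bar R}) K (c : \bar R) :
  (forall n, mu `](K + n.+1%:R^-1)%R, +oo[%classic <= c) ->
  mu `]K, +oo[%classic <= c.
Proof.
move=> le_c; pose I n : set R := `](K + n.+1%:R^-1)%R, +oo[%classic.
have UI : \bigcup_n I n = `]K, +oo[%classic.
  apply/seteqP; split => S /=.
    move=> [n _]; rewrite /I /= !in_itv /= !andbT; apply: lt_trans.
    by rewrite ltrDl invr_gt0 ltr0n.
  rewrite in_itv /= andbT => /ltr_add_invr [n KS].
  by exists n => //; rewrite /I /= in_itv /= andbT.
have mI n : measurable (I n) by exact: measurable_itv.
have nd_I : {homo I : n m / (n <= m)%N >-> (n <= m)%O}.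
  move=> n m nm; apply/subsetPset => S; rewrite /I /= !in_itv /= !andbT.
  by apply: le_lt_trans; rewrite lerD2l lef_pV2 ?posrE ?ltr0n // ler_nat ltnS.
have mUI : measurable (\bigcup_n I n) by rewrite UI; exact: measurable_itv.
have cvg_I := @nondecreasing_cvg_mu _ _ _ mu _ mI mUI nd_I.
rewrite -UI -(cvg_lim _ cvg_I) //; apply: lime_le.
  by apply/cvg_ex; exists (mu (\bigcup_n I n)).
exact: nearW.
Qed.

Lemma tail_le_of_call_value_eq nu mu K : (0 <= K)%R ->
  (forall K, (0 <= K)%R -> call_value R nu K = call_value R mu K) ->
  (forall K, (0 <= K)%R -> call_value R mu K \is a fin_num) ->
  nu `]K, +oo[%classic <= mu `]K, +oo[%classic.
Proof.
move=> K0 eq_call fin_call; apply: measure_oitv_le_shifts => n.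
have h0 : (0 < n.+1%:R^-1 :> R)%R by rewrite invr_gt0 ltr0n.
have Kh0 : (0 <= K + n.+1%:R^-1)%R by rewrite addr_ge0 // ltW.
have shift_nu := call_value_shift_ge nu _ _ K0 h0; rewrite !eq_call // in shift_nu.
have := le_trans shift_nu (call_value_shift_le mu _ _ K0 h0).
by rewrite leeD2lE ?fin_call // lee_pmul2l // lte_fin.
Qed.

Lemma probability_oitv_lt0 nu K : on_Omega R nu -> (K < 0)%R ->
  nu `]K, +oo[%classic = 1.
Proof.
move=> nuO K0; apply/le_anti/andP; split.
  by apply: probability_le1; exact: measurable_itv.
rewrite -[X in X <= _]nuO le_measure ?inE //; try exact: measurable_itv.
by move=> S /Omega_ge0 S0; rewrite /= in_itv /= andbT (lt_le_trans K0).
Qed.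

Lemma tail_eq_of_call_value_eq nu mu : on_Omega R nu -> on_Omega R mu ->
  (forall K, (0 <= K)%R -> call_value R nu K = call_value R mu K) ->
  (forall K, (0 <= K)%R -> call_value R mu K \is a fin_num) ->
  forall K, nu `]K, +oo[%classic = mu `]K, +oo[%classic.
Proof.
move=> nuO muO eq_call fin_call K; have [K0|K0] := ltP K 0%R.
  by rewrite !probability_oitv_lt0.
apply/le_anti/andP; split; first exact: tail_le_of_call_value_eq.
apply: tail_le_of_call_value_eq => // K' K'0; first by rewrite eq_call.
by rewrite eq_call // fin_call.
Qed.

Lemma probability_eq_of_tail_eq nu mu :
  (forall K, nu `]K, +oo[%classic = mu `]K, +oo[%classic) ->
  forall A, measurable A -> nu A = mu A.
Proof.
move=> eq_tail.
have fin_itv (P : probability R R) (X : set R) : measurable X -> P X < +oo.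
  by move=> mX; exact: le_lt_trans (probability_le1 _ mX) (ltey _).
have eq_ocitv X : ocitv X -> nu X = mu X.
  move=> /ocitvP [->|[[a b] /= ab ->]]; first by rewrite !measure0.
  have ab_diff : `]a, b]%classic = `]a, +oo[%classic `\` `]b, +oo[%classic.
    apply/seteqP; split => S /=; rewrite !in_itv /= !andbT.
      by move=> /andP[aS Sb]; split => //; apply/negP; rewrite -leNgt.
    by move=> [aS /negP]; rewrite -leNgt => Sb; apply/andP.
  have sub : `]b, +oo[%classic `<=` `]a, +oo[%classic.
    by move=> S /=; rewrite !in_itv /= !andbT; exact: lt_trans.
  rewrite ab_diff !measureD ?(setIidr sub) //; try exact: measurable_itv.
  - by congr (_ - _); exact: eq_tail.
  - exact: fin_itv (measurable_itv _).
  - exact: fin_itv (measurable_itv _).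
apply: (measure_unique (@ocitv R) (fun k : nat => `](- k%:R)%R, k%:R]%classic)).
- by [].
- exact: ocitvI.
- by move=> k; exact: is_ocitv.
- apply/seteqP; split => // S _.
  have := archi_boundP (normr_ge0 S); rewrite ltr_norml => /andP[lo hi].
  by exists (Num.Def.archi_bound `|S|) => //=; rewrite in_itv /= lo ltW.
- exact: eq_ocitv.
- by move=> k; exact: fin_itv (measurable_itv _).
Qed.

End option_values.

Theorem theorem1 (R : realType) (C P : R -> R) (F : R)
  (mu1 mu2 : probability R R) :
  (forall K : R, 0 <= K -> C K - P K + K = F) ->
  on_Omega R mu1 -> on_Omega R mu2 ->
  finite_first_moment R mu1 -> finite_first_moment R mu2 ->
  (forall K : R, 0 <= K -> (C K)%:E = call_value R mu1 K) ->
  (forall K : R, 0 <= K -> (P K)%:E = put_value R mu2 K) ->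
  exists muQ : probability R R,
    [/\ on_Omega R muQ,
        (forall K : R, 0 <= K -> (C K)%:E = call_value R muQ K),
        (forall K : R, 0 <= K -> (P K)%:E = put_value R muQ K) &
        (forall nu : probability R R,
           on_Omega R nu ->
           (forall K : R, 0 <= K -> (C K)%:E = call_value R nu K) ->
           (forall K : R, 0 <= K -> (P K)%:E = put_value R nu K) ->
           forall A : set R, measurable A -> A `<=` Omega R -> nu A = muQ A)].
Proof.
move=> parity mu1O _ _ _ call1 put2.
have P0 : P 0 = 0 by apply: EFin_inj; rewrite put2 // put_value0.
exists mu1; split => //.
- move=> K K0.
  have put_K : P K = C K + K - C 0.
    by have := parity K K0; have := parity 0 (lexx 0); rewrite P0; lra.
  have := put_call_value mu1 K K0 mu1O; rewrite -!call1 // => put_call.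
  by rewrite -[put_value _ _ _](@addeK _ (C 0)%:E) // put_call put_K EFinB EFinD.
- move=> nu nuO call_nu _ A mA _.
  apply: probability_eq_of_tail_eq mA; apply: tail_eq_of_call_value_eq => // K K0.
  + by rewrite -call_nu // call1.
  + by rewrite -call1.
Qed.
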